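(* Let $d\ge2$ and let $n_1\ge n_2\ge n_3\ge n_4\ge0$ be integers with $n_1+n_2+n_3+n_4=2d-4$. Then \[\int_{\mathrm{Gr}(2,d+1)}\sigma_{n_1}\sigma_{n_2}\sigma_{n_3}\sigma_{n_4}(8\sigma_{11}-2\sigma_1^2)=\begin{cases}6 & \text{if } n_1=n_2=n_3=n_4,\\ 4 & \text{if } n_1=n_2\neq n_3=n_4,\\ 2 & \text{if } n_1+n_4=n_2+n_3 \text{ and } n_1\neq n_2,\\ -2 & \text{if } n_1=n_2+n_3+n_4+2,\\ 0 & \text{otherwise.}\end{cases}\]
   Context: $\sigma_{a,b}$ denote the Schubert classes on $\mathrm{Gr}(2,d+1)$, $\sigma_a=\sigma_{a,0}$, with $\sigma_a=0$ for $a>d-1$. *)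

From HB Require Import structures.
From mathcomp Require Import all_boot all_order all_algebra.
Set Implicit Arguments. Unset Strict Implicit. Unset Printing Implicit Defensive.
Import Order.TTheory GRing.Theory Num.Theory.
Local Open Scope ring_scope.

(* A class in H^*(Gr(2,d+1)) : integer coefficients on Schubert classes
   sigma_{a,b}, d-1 >= a >= b >= 0, indexed by (a,b) : 'I_d * 'I_d
   (coefficients at pairs with b > a are irrelevant and are always 0 below). *)
Definition cls (d : nat) := {ffun 'I_d * 'I_d -> int}.

(* Schubert class sigma_{a,b}; it is 0 unless d-1 >= a >= b (so in particular
   sigma_a = 0 for a > d-1). *)
Definition sigma2 (d a b : nat) : cls d :=
  [ffun ab : 'I_d * 'I_d =>
     (((ab.1 : nat) == a) && ((ab.2 : nat) == b) && (b <= a)%N)%:Z].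

Definition sigma (d a : nat) : cls d := sigma2 d a 0.

(* Littlewood-Richardson coefficient c^{(a,b)}_{(a1,b1),(a2,b2)} for two-row
   partitions: sigma_{a1,b1} sigma_{a2,b2} = sum_{i=0}^{min(a1-b1,a2-b2)}
   sigma_{a1+a2-b2-i, b1+b2+i} (Pieri / Clebsch-Gordan). *)
Definition lrc (a1 b1 a2 b2 a b : nat) : int :=
  ([&& (b1 <= a1)%N, (b2 <= a2)%N, (a + b == a1 + b1 + (a2 + b2))%N,
       (b1 + b2 <= b)%N & (b - (b1 + b2) <= minn (a1 - b1) (a2 - b2))%N])%:Z.

(* cup product in H^*(Gr(2,d+1)): LR product, dropping the sigma_{a,b}
   with a > d-1 (which vanish on Gr(2,d+1)). *)
Definition cmul (d : nat) (f g : cls d) : cls d :=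
  [ffun ab : 'I_d * 'I_d =>
     \sum_(x : 'I_d * 'I_d) \sum_(y : 'I_d * 'I_d)
        f x * g y * lrc x.1 x.2 y.1 y.2 ab.1 ab.2].

Definition csub (d : nat) (f g : cls d) : cls d := [ffun ab => f ab - g ab].
Definition cscale (d : nat) (k : int) (f : cls d) : cls d := [ffun ab => k * f ab].

(* integral over Gr(2,d+1): coefficient of the point class sigma_{d-1,d-1} *)
Definition cint (d : nat) (f : cls d) : int :=
  \sum_(x : 'I_d * 'I_d)
     f x * (((x.1 : nat) == d.-1) && ((x.2 : nat) == d.-1))%:Z.

From HB Require Import structures.
From mathcomp Require Import all_boot all_order all_algebra.
From mathcomp Require Import zify ring.
Import Order.TTheory GRing.Theory Num.Theory.
Local Open Scope ring_scope.

(* The argument has four steps.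
   1. Pieri: sigma_n sigma_m = sum_{b <= m} sigma_{n+m-b,b} for m <= n < d.
   2. T := 8 sigma_{1,1} - 2 sigma_1^2 equals 6 sigma_{1,1} - 2 sigma_2, and as
      sigma_{1,1}, sigma_2 are dual to sigma_{d-2,d-2}, sigma_{d-1,d-3},
      int X.T = 6 X_{d-2,d-2} - 2 X_{d-1,d-3} for every class X.
   3. For X = (sigma_{n1} sigma_{n2}) (sigma_{n3} sigma_{n4}) both coefficients
      count lattice points: with D := n1 + n2 - (d-2), the first counts the
      v <= n4 with v + D <= n2, the second is a sum of three such windows.
   4. Evaluating the windows in closed form, only the boundary cases
      D = n2 + 1 and n2 = D + n4 survive, and these match the table. *)

Definition cls_of (d : nat) (g : nat -> nat -> int) : cls d :=
  [ffun ab : 'I_d * 'I_d => g ab.1 ab.2].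

Lemma int_of_andb (a b : bool) : (a && b)%:Z = a%:Z * b%:Z :> int.
Proof. by case: a; case: b. Qed.

Lemma sum_pairs d (G : nat -> nat -> int) :
  \sum_(x : 'I_d * 'I_d) G x.1 x.2 = \sum_(0 <= i < d) \sum_(0 <= j < d) G i j.
Proof.
rewrite -(pair_big xpredT xpredT (fun i j : 'I_d => G i j)) /= big_mkord.
by apply: eq_bigr => i _; rewrite big_mkord.
Qed.

Lemma sum_delta d p (f : nat -> int) :
  \sum_(0 <= i < d) ((i == p)%:Z * f i) = (p < d)%N%:Z * f p.
Proof.
rewrite big_mkord; case: (ltnP p d) => hp.
  rewrite (bigD1 (Ordinal hp)) //= eqxx mul1r big1 ?addr0 // => i hi.
  rewrite (_ : (i : nat) == p = false) ?mul0r //.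
  by apply: contraNF hi => /eqP ei; apply/eqP/val_inj.
rewrite mul0r big1 // => i _; rewrite (_ : (i : nat) == p = false) ?mul0r //.
by have := ltn_ord i; lia.
Qed.

Lemma sum_delta2 d p q (F : nat -> nat -> int) :
  \sum_(0 <= i < d) \sum_(0 <= j < d) (((i == p) && (j == q))%:Z * F i j)
  = ((p < d)%N && (q < d)%N)%:Z * F p q.
Proof.
under eq_bigr => i _ do under eq_bigr => j _ do rewrite int_of_andb -mulrA.
under eq_bigr => i _ do rewrite -big_distrr /=.
by rewrite sum_delta sum_delta int_of_andb mulrA.
Qed.

Lemma cmul_cls_of d g h : cmul (cls_of d g) (cls_of d h) =
  cls_of d (fun a b => \sum_(0 <= x1 < d) \sum_(0 <= x2 < d) (g x1 x2 *
     \sum_(0 <= y1 < d) \sum_(0 <= y2 < d) (h y1 y2 * lrc x1 x2 y1 y2 a b))).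
Proof.
apply/ffunP => -[a b]; rewrite !ffunE /=.
under eq_bigr => x _ do under eq_bigr => y _ do rewrite !ffunE -mulrA.
under eq_bigr => x _ do rewrite -big_distrr /=
   (sum_pairs d (fun y1 y2 => h y1 y2 * lrc x.1 x.2 y1 y2 a b)).
exact: (sum_pairs d (fun x1 x2 => g x1 x2 *
   \sum_(0 <= y1 < d) \sum_(0 <= y2 < d) (h y1 y2 * lrc x1 x2 y1 y2 a b))).
Qed.

Lemma sigma2_cls_of d a b :
  sigma2 d a b = cls_of d (fun i j => ((i == a) && (j == b) && (b <= a)%N)%:Z).
Proof. by apply/ffunP => -[i j]; rewrite !ffunE. Qed.

Lemma cint_cls_of d g : (0 < d)%N -> cint (cls_of d g) = g d.-1 d.-1.
Proof.
move=> hd; rewrite /cint.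
under eq_bigr => x _ do rewrite ffunE mulrC.
rewrite (sum_pairs d (fun i j => ((i == d.-1) && (j == d.-1))%:Z * g i j)).
by rewrite sum_delta2 (_ : (d.-1 < d)%N) ?mul1r //; lia.
Qed.

Lemma cmul_sigma_vanish d n G :
  (d <= n)%N -> cmul (sigma d n) G = cls_of d (fun _ _ => 0).
Proof.
move=> hn; apply/ffunP => -[a b]; rewrite !ffunE /=.
apply: big1 => x _; apply: big1 => y _.
rewrite !ffunE (_ : (x.1 : nat) == n = false) ?mul0r //.
by apply/negbTE; have := ltn_ord x.1; lia.
Qed.

Lemma cmul0 d G : cmul (cls_of d (fun _ _ => 0)) G = cls_of d (fun _ _ => 0).
Proof.
apply/ffunP => -[a b]; rewrite !ffunE /=.
by apply: big1 => x _; apply: big1 => y _; rewrite !ffunE !mul0r.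
Qed.

Lemma cint0 d : cint (cls_of d (fun _ _ => 0)) = 0.
Proof. by rewrite /cint big1 // => x _; rewrite ffunE mul0r. Qed.

Lemma pieri_special d n m : (m <= n)%N -> (n < d)%N ->
  cmul (sigma d n) (sigma d m) =
  cls_of d (fun a b => ((a == (n + m - b)%N) && (b <= m)%N)%:Z).
Proof.
move=> hmn hn; rewrite /sigma !sigma2_cls_of cmul_cls_of.
apply/ffunP => -[a b]; rewrite !ffunE /=.
under eq_bigr => ? _ do under eq_bigr => ? _ do rewrite leq0n andbT.
rewrite sum_delta2.
under eq_bigr => ? _ do under eq_bigr => ? _ do rewrite leq0n andbT.
rewrite sum_delta2 /lrc !mulrA -!int_of_andb; congr (Posz (nat_of_bool _)).
by apply/idP/idP => H; lia.
Qed.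

Definition T_coef (i j : nat) : int :=
  6 * ((i == 1)%N && (j == 1)%N)%:Z - 2 * ((i == 2)%N && (j == 0)%N)%:Z.

(* 8 sigma_{1,1} - 2 sigma_1^2 = 6 sigma_{1,1} - 2 sigma_2, since
   sigma_1^2 = sigma_{1,1} + sigma_2. *)
Lemma T_class d : (2 <= d)%N ->
  csub (cscale 8 (sigma2 d 1 1)) (cscale 2 (cmul (sigma d 1) (sigma d 1))) =
  cls_of d T_coef.
Proof.
move=> hd; rewrite pieri_special //; apply/ffunP => -[i j]; rewrite !ffunE /=.
by move: (i : nat) (j : nat) => [|[|[|?]]] [|[|?]].
Qed.

(* Duality: sigma_{1,1} pairs only with sigma_{d-2,d-2}, and sigma_2 only with
   sigma_{d-1,d-3}, to the point class. *)
Lemma point_coef_mul_T d x1 x2 : (2 <= d)%N ->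
  \sum_(0 <= y1 < d) \sum_(0 <= y2 < d) (T_coef y1 y2 * lrc x1 x2 y1 y2 d.-1 d.-1)
  = 6 * ((x1 == d - 2)%N && (x2 == d - 2)%N)%:Z
    - 2 * (3 <= d)%N%:Z * ((x1 == d - 1)%N && (x2 == d - 3)%N)%:Z.
Proof.
move=> hd; rewrite /T_coef.
under eq_bigr => ? _ do under eq_bigr => ? _ do rewrite mulrBl -!mulrA.
under eq_bigr => ? _ do rewrite sumrB -!big_distrr.
rewrite sumrB -!big_distrr !sum_delta2 /lrc -!mulrA -!int_of_andb.
by congr (6 * Posz (nat_of_bool _) - 2 * Posz (nat_of_bool _));
  apply/idP/idP => H; lia.
Qed.

Lemma cint_mul_T d g : (2 <= d)%N ->
  cint (cmul (cls_of d g) (cls_of d T_coef))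
  = 6 * g (d - 2)%N (d - 2)%N - 2 * (3 <= d)%N%:Z * g (d - 1)%N (d - 3)%N.
Proof.
move=> hd; rewrite cmul_cls_of cint_cls_of; last lia.
have regroup (G A B : int) : G * (6 * A - 2 * (3 <= d)%N%:Z * B)
    = A * (6 * G) - B * (2 * (3 <= d)%N%:Z * G) by ring.
under eq_bigr => ? _ do under eq_bigr => ? _ do rewrite point_coef_mul_T // regroup.
under eq_bigr => ? _ do rewrite sumrB.
rewrite sumrB !sum_delta2 (_ : (d - 2 < d)%N && (d - 2 < d)%N) ?mul1r; last lia.
by rewrite (_ : (d - 1 < d)%N && (d - 3 < d)%N) ?mul1r ?mulrA; last lia.
Qed.

(* Coefficient of sigma_{a,b} in (sum_{u <= m} sigma_{p-u,u}) (sum_{v <= k} sigma_{q-v,v}). *)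
Definition pieri_prod_coef (d p m q k a b : nat) : int :=
  \sum_(0 <= u < d) (((p - u < d)%N && (u <= m)%N)%:Z *
    \sum_(0 <= v < d) (((q - v < d)%N && (v <= k)%N)%:Z * lrc (p - u) u (q - v) v a b)).

Lemma sum_antidiagonal d K (c : nat -> bool) (F : nat -> nat -> int) :
  \sum_(0 <= x1 < d) \sum_(0 <= x2 < d) (((x1 == (K - x2)%N) && c x2)%:Z * F x1 x2)
  = \sum_(0 <= x2 < d) (((K - x2 < d)%N && c x2)%:Z * F (K - x2)%N x2).
Proof.
rewrite exchange_big; apply: eq_bigr => x2 _.
under eq_bigr => ? _ do rewrite int_of_andb -mulrA.
by rewrite sum_delta int_of_andb mulrA.
Qed.

Lemma cmul_pieri_sums d p m q k :
  cmul (cls_of d (fun a b => ((a == (p - b)%N) && (b <= m)%N)%:Z))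
       (cls_of d (fun a b => ((a == (q - b)%N) && (b <= k)%N)%:Z)) =
  cls_of d (pieri_prod_coef d p m q k).
Proof.
rewrite cmul_cls_of; apply/ffunP => -[a b]; rewrite !ffunE /= sum_antidiagonal.
by apply: eq_bigr => u _; rewrite sum_antidiagonal.
Qed.

Lemma count_window n lo c hi k : (k < n)%N ->
  \sum_(0 <= v < n) ((lo <= v)%N && (v + c <= hi)%N && (v <= k)%N)%:Z
  = (minn (hi.+1 - c) k.+1 - lo)%N%:Z.
Proof.
move=> hk; suff -> : forall m, \sum_(0 <= v < m)
    ((lo <= v)%N && (v + c <= hi)%N && (v <= k)%N)%:Z
  = (minn (minn (hi.+1 - c) k.+1) m - lo)%N%:Z by congr Posz; lia.
elim=> [|m IH]; first by rewrite big_geq //; lia.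
rewrite big_nat_recr //= IH.
by case: (boolP ((lo <= m)%N && (m + c <= hi)%N && (m <= k)%N)) => /= h; lia.
Qed.

Section FourFactors.

(* The situation of the theorem, with n1 < d (otherwise sigma_{n1} = 0) and
   D := n1 + n2 - (d - 2) = (n1 + n2 - n3 - n4) / 2. *)
Variables d n1 n2 n3 n4 D : nat.
Hypotheses (h43 : (n4 <= n3)%N) (h32 : (n3 <= n2)%N) (h21 : (n2 <= n1)%N)
  (hn1 : (n1 < d)%N) (hD12 : (n1 + n2 = D + (d - 2))%N) (hD34 : (D + n3 + n4 = d - 2)%N).

Lemma mid_term u v :
  ((n1 + n2 - u < d)%N && (u <= n2)%N)%:Z * (((n3 + n4 - v < d)%N && (v <= n4)%N)%:Z
    * lrc (n1 + n2 - u) u (n3 + n4 - v) v (d - 2) (d - 2))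
  = (u == v + D)%N%:Z * ((v + D <= n2)%N && (v <= n4)%N)%:Z.
Proof.
rewrite /lrc -!int_of_andb; congr (Posz (nat_of_bool _)).
by apply/idP/idP => H; lia.
Qed.

Lemma coef_mid :
  pieri_prod_coef d (n1 + n2) n2 (n3 + n4) n4 (d - 2) (d - 2)
  = (minn (n2.+1 - D) n4.+1)%N%:Z.
Proof.
rewrite /pieri_prod_coef.
under eq_bigr => u _ do rewrite big_distrr /=.
rewrite exchange_big /=.
under eq_bigr => v _ do under eq_bigr => u _ do rewrite mid_term.
under eq_bigr => v _ do rewrite sum_delta -int_of_andb.
rewrite (eq_bigr (fun v => ((0 <= v)%N && (v + D <= n2)%N && (v <= n4)%N)%:Z)).
  by rewrite count_window ?subn0 //; lia.
by move=> v _; congr (Posz (nat_of_bool _)); apply/idP/idP => H; lia.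
Qed.

Hypothesis (hd3 : (3 <= d)%N).

Lemma edge_support u v :
  ((n1 + n2 - u < d)%N && (u <= n2)%N) && (((n3 + n4 - v < d)%N && (v <= n4)%N) &&
    [&& (u <= n1 + n2 - u)%N, (v <= n3 + n4 - v)%N,
        (d - 1 + (d - 3) == n1 + n2 - u + u + (n3 + n4 - v + v))%N,
        (u + v <= d - 3)%N & (d - 3 - (u + v) <= minn (n1 + n2 - u - u) (n3 + n4 - v - v))%N])
  = [&& (u <= n2)%N, (v <= n4)%N, (v + D <= u + 1)%N, (u <= v + D + 1)%N
      & (u + v + 1 <= d - 2)%N].
Proof. by apply/idP/idP => H; lia. Qed.

(* Splitting along u = v + D - 1, v + D, v + D + 1; the middle case loses its
   last point v = n4 exactly when n1 = n2 and n3 = n4. *)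
Lemma edge_term u v :
  ((n1 + n2 - u < d)%N && (u <= n2)%N)%:Z * (((n3 + n4 - v < d)%N && (v <= n4)%N)%:Z
    * lrc (n1 + n2 - u) u (n3 + n4 - v) v (d - 1) (d - 3))
  = (u == v + D - 1)%N%:Z * ((1 - D <= v)%N && (v + D <= n2.+1)%N && (v <= n4)%N)%:Z
  + (u == v + D)%N%:Z
      * ((0 <= v)%N && (v + (D + ((n1 == n2) && (n3 == n4))) <= n2)%N && (v <= n4)%N)%:Z
  + (u == v + D + 1)%N%:Z * ((0 <= v)%N && (v + D.+1 <= n2)%N && (v <= n4)%N)%:Z.
Proof.
rewrite /lrc -!int_of_andb edge_support.
case: (boolP (u == v + D - 1)%N) => ?; case: (boolP (u == v + D)%N) => ?;
  case: (boolP (u == v + D + 1)%N) => ?; try (exfalso; lia);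
  rewrite ?mul0r ?mul1r ?add0r ?addr0; lia.
Qed.

Lemma coef_edge :
  pieri_prod_coef d (n1 + n2) n2 (n3 + n4) n4 (d - 1) (d - 3)
  = (minn (n2.+2 - D) n4.+1 - (1 - D))%N%:Z
  + (minn (n2.+1 - (D + ((n1 == n2) && (n3 == n4)))) n4.+1)%N%:Z
  + (minn (n2 - D) n4.+1)%N%:Z.
Proof.
rewrite /pieri_prod_coef.
under eq_bigr => u _ do rewrite big_distrr /=.
rewrite exchange_big /=.
under eq_bigr => v _ do under eq_bigr => u _ do rewrite edge_term.
under eq_bigr => v _ do rewrite !big_split /= !sum_delta -!int_of_andb.
rewrite !big_split /= -[(n2 - D)%N]/(n2.+1 - D.+1)%N.
rewrite -[minn (n2.+1 - _)%N _]subn0 -[minn (n2.+1 - D.+1)%N _]subn0.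
rewrite -!(@count_window d); try lia.
by congr (_ + _ + _); apply: eq_bigr => v _; congr (Posz (nat_of_bool _));
  apply/idP/idP => H; lia.
Qed.

End FourFactors.

Lemma window_combination (n2 n4 D : nat) (cr : bool) :
  (cr -> D + n4 = n2)%N -> (D = 0 -> n4 = n2)%N ->
  6 * (minn (n2.+1 - D) n4.+1)%N%:Z
  - 2 * ((minn (n2.+2 - D) n4.+1 - (1 - D))%N%:Z
         + (minn (n2.+1 - (D + cr)) n4.+1)%N%:Z + (minn (n2 - D) n4.+1)%N%:Z)
  = if D == n2.+1 then -2
    else if (D + n4 == n2)%N then 2 + 2 * (D == 0)%:Z + 2 * cr%:Z else 0.
Proof.
move=> hcr hD0.
case: eqP => [->|hDn2]; first by move: hcr; case: cr => /= hcr; lia.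
by case: eqP; move: hcr hD0; case: cr => /= hcr hD0; case: (D =P 0) => /= ?; lia.
Qed.

Lemma table_of_boundary (n1 n2 n3 n4 D : nat) :
  (n4 <= n3)%N -> (n3 <= n2)%N -> (n2 <= n1)%N -> (n1 + n2 = D + D + n3 + n4)%N ->
  (if D == n2.+1 then -2
   else if (D + n4 == n2)%N then 2 + 2 * (D == 0)%:Z + 2 * ((n1 == n2) && (n3 == n4))%:Z
   else 0)
  = if [&& n1 == n2, n2 == n3 & n3 == n4] then 6
    else if [&& n1 == n2, n2 != n3 & n3 == n4] then 4
    else if (n1 + n4 == n2 + n3)%N && (n1 != n2) then 2
    else if n1 == (n2 + n3 + n4 + 2)%N then -2
    else 0 :> int.
Proof. by move=> *; (repeat case: ifPn => ?); lia. Qed.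

Theorem lemma4p12 (d n1 n2 n3 n4 : nat) :
  (2 <= d)%N ->
  (n4 <= n3)%N -> (n3 <= n2)%N -> (n2 <= n1)%N ->
  (n1 + n2 + n3 + n4 = 2 * d - 4)%N ->
  cint (cmul (cmul (cmul (sigma d n1) (sigma d n2)) (cmul (sigma d n3) (sigma d n4)))
             (csub (cscale 8 (sigma2 d 1 1))
                   (cscale 2 (cmul (sigma d 1) (sigma d 1)))))
  = if [&& n1 == n2, n2 == n3 & n3 == n4] then 6
    else if [&& n1 == n2, n2 != n3 & n3 == n4] then 4
    else if (n1 + n4 == n2 + n3)%N && (n1 != n2) then 2
    else if n1 == (n2 + n3 + n4 + 2)%N then -2
    else 0.
Proof.
move=> hd h43 h32 h21 hsum.
have [hn1 | hn1] := ltnP n1 d; last first.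
  rewrite cmul_sigma_vanish // !cmul0 cint0.
  by (repeat case: ifPn => ?); lia.
have [D hD12 hD34] : exists2 D, (n1 + n2 = D + (d - 2))%N & (D + n3 + n4 = d - 2)%N.
  by exists (n1 + n2 - (d - 2))%N; lia.
have hn3 : (n3 < d)%N by lia.
rewrite (pieri_special _ _ _ h21 hn1) (pieri_special _ _ _ h43 hn3).
rewrite T_class // cmul_pieri_sums cint_mul_T // (coef_mid _ _ _ _ _ D) //.
have [hd3 | hd2] := boolP (3 <= d)%N.
  have hcross : (n1 == n2) && (n3 == n4) -> (D + n4 = n2)%N.
    by case/andP => /eqP ? /eqP ?; lia.
  have hD0 : D = 0%N -> n4 = n2 by lia.
  rewrite (coef_edge _ _ _ _ _ D) // mulr1 window_combination //.
  by apply: table_of_boundary => //; lia.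
rewrite mulr0 mul0r subr0.
have [-> -> -> ->] : [/\ n1 = 0, n2 = 0, n3 = 0 & n4 = 0]%N by split; lia.
by have -> : D = 0%N by lia.
Qed.
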